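(* Let $K$ be the transition kernel of a Markov chain on a general state space, reversible with respect to $\pi$. For any $f\in L_2(\pi)$ with $\|f\|_{2,\pi}\neq0$ and every integer $n\ge1$, $$\frac{\|K^nf\|_{2,\pi}^2}{\|f\|_{2,\pi}^2}\ge\Big(\frac{\|Kf\|_{2,\pi}^2}{\|f\|_{2,\pi}^2}\Big)^n.$$
   Context: Reversibility: $K(x,dy)\pi(dx)=K(y,dx)\pi(dy)$. $(Kf)(x)=\int K(x,dy)f(y)$, $K^n f=K(K^{n-1}f)$. $\|f\|_{2,\pi}^2=\int f^2d\pi$. *)

From HB Require Import structures.
From mathcomp Require Import all_boot all_order all_algebra.
From mathcomp Require Import all_classical all_reals all_analysis.
Set Implicit Arguments. Unset Strict Implicit. Unset Printing Implicit Defensive.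
Import Order.TTheory GRing.Theory Num.Theory.
Import numFieldNormedType.Exports.
Local Open Scope classical_set_scope.
Local Open Scope ring_scope.

Definition Kop d (T : measurableType d) (R : realType)
  (K : R.-pker T ~> T) (f : T -> R) : T -> R :=
  fun x => (\int[K x]_(y in setT) f y)%R.

Definition Kpow d (T : measurableType d) (R : realType)
  (K : R.-pker T ~> T) (n : nat) (f : T -> R) : T -> R :=
  iter n (Kop K) f.

Definition L2norm2 d (T : measurableType d) (R : realType)
  (pi : {measure set T -> \bar R}) (g : T -> R) : R :=
  (\int[pi]_(x in setT) (g x ^+ 2))%R.

(* Reversibility: K(x,dy) pi(dx) = K(y,dx) pi(dy), i.e. for all measurable
   A, B:  \int_A K(x,B) pi(dx) = \int_B K(y,A) pi(dy). *)
Definition reversible d (T : measurableType d) (R : realType)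
  (K : R.-pker T ~> T) (pi : {measure set T -> \bar R}) : Prop :=
  forall A B : set T, measurable A -> measurable B ->
    (\int[pi]_(x in A) K x B = \int[pi]_(y in B) K y A)%E.

Definition inL2 d (T : measurableType d) (R : realType)
  (pi : {measure set T -> \bar R}) (f : T -> R) : Prop :=
  measurable_fun setT f /\ (\int[pi]_x ((f x ^+ 2)%:E) < +oo)%E.

From HB Require Import structures.
From mathcomp Require Import all_boot all_order all_algebra.
From mathcomp Require Import all_classical all_reals all_analysis.
From mathcomp Require Import ring lra measurable_realfun.
Set Implicit Arguments. Unset Strict Implicit. Unset Printing Implicit Defensive.
Import Order.TTheory GRing.Theory Num.Theory.
Import numFieldNormedType.Exports.
Import HBNNSimple.
Local Open Scope classical_set_scope.
Local Open Scope ring_scope.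

(* Reversibility makes the Markov operator K self-adjoint on L_2(pi):
   <g, K h> = <K g, h>.  Hence m_k := ||K^k f||^2 satisfies
   m_(k+1) = <K^k f, K^(k+2) f> <= sqrt (m_k m_(k+2)) by Cauchy-Schwarz, so
   (m_k) is log-convex and therefore dominates the geometric sequence
   m_0 (m_1 / m_0)^n.
   Self-adjointness is first proved for nonnegative functions, where
   reversibility extends from indicators to all measurable functions by
   simple-function approximation and monotone convergence; it then passes to
   L_2(pi) by splitting into positive and negative parts.  The splitting is
   legitimate because K h is pi-a.e. defined for h in L_2(pi): pi is
   K-invariant, so \int (K |h|) dpi = \int |h| dpi < +oo. *)

Lemma discriminant_le (R : realFieldType) (A B C : R) : 0 <= B ->
  (forall t, 0 <= A + 2 * t * C + t ^+ 2 * B) -> C ^+ 2 <= A * B.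
Proof.
move=> B_ge0 quad_ge0; have [B_eq0|B_neq0] := eqVneq B 0.
  subst B; have [->|Cn0] := eqVneq C 0; first by rewrite expr0n mulr0.
  have := quad_ge0 (- (A + 1) / (2 * C)).
  have -> : 2 * (- (A + 1) / (2 * C)) * C = - (A + 1) by field; rewrite Cn0.
  lra.
have := quad_ge0 (- C / B).
have -> : A + 2 * (- C / B) * C + (- C / B) ^+ 2 * B = (A * B - C ^+ 2) / B.
  by field.
by rewrite pmulr_lge0 ?invr_gt0 ?lt_def ?B_neq0 //; lra.
Qed.

Section L2_measure.
Context d (T : measurableType d) (R : realType) (mu : {measure set T -> \bar R}).

Lemma inL2_integrable_sqr (g : T -> R) : inL2 mu g ->
  mu.-integrable setT (fun x => (g x ^+ 2)%:E).
Proof.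
move=> [mg ig]; apply/integrableP; split.
  by apply/measurable_EFinP; exact: measurable_funX.
by under eq_integral do rewrite gee0_abs ?lee_fin ?sqr_ge0 //.
Qed.

Lemma inL2_integrable_mul (g h : T -> R) : inL2 mu g -> inL2 mu h ->
  mu.-integrable setT (fun x => (g x * h x)%:E).
Proof.
move=> g2 h2; have [mg _] := g2; have [mh _] := h2.
apply: (le_integrable measurableT _ _
  (integrableD measurableT (inL2_integrable_sqr g2) (inL2_integrable_sqr h2))).
  by apply/measurable_EFinP; exact: measurable_funM.
move=> x _; rewrite -EFinD !abse_EFin lee_fin normrM.
rewrite [X in _ <= X]ger0_norm ?addr_ge0 ?sqr_ge0 //.
rewrite -(real_normK (num_real (g x))) -(real_normK (num_real (h x))).
by have := sqr_ge0 (`|g x| - `|h x|); nra.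
Qed.

Lemma Rintegral_cauchy_schwarz (g h : T -> R) : inL2 mu g -> inL2 mu h ->
  (\int[mu]_x (g x * h x)) ^+ 2 <= \int[mu]_x (g x ^+ 2) * \int[mu]_x (h x ^+ 2).
Proof.
move=> g2 h2.
have ig := inL2_integrable_sqr g2; have ih := inL2_integrable_sqr h2.
have igh := inL2_integrable_mul g2 h2.
apply: discriminant_le => [|t]; first by apply: Rintegral_ge0 => x _; exact: sqr_ge0.
have igh' : mu.-integrable setT (EFin \o (fun x => 2 * t * (g x * h x))).
  apply: (eq_integrable measurableT _ _ _ (integrableZl measurableT (2 * t) igh)).
  by move=> x _; rewrite /= EFinM.
have ih' : mu.-integrable setT (EFin \o (fun x => t ^+ 2 * h x ^+ 2)).
  apply: (eq_integrable measurableT _ _ _ (integrableZl measurableT (t ^+ 2) ih)).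
  by move=> x _; rewrite /= EFinM.
have : 0 <= \int[mu]_x ((g x + t * h x) ^+ 2).
  by apply: Rintegral_ge0 => x _; exact: sqr_ge0.
have expand x : (g x + t * h x) ^+ 2 =
    g x ^+ 2 + 2 * t * (g x * h x) + t ^+ 2 * h x ^+ 2 by ring.
under eq_Rintegral do rewrite expand.
rewrite RintegralD //; last first.
  apply: (eq_integrable measurableT _ _ _ (integrableD measurableT ig igh')).
  by move=> x _; rewrite /= EFinD.
by rewrite RintegralD // RintegralZl // RintegralZl.
Qed.

Lemma ae_eq_Rintegral (g h : T -> R) :
  measurable_fun setT g -> measurable_fun setT h ->
  {ae mu, forall x, g x = h x} ->
  \int[mu]_x g x = \int[mu]_x h x.
Proof.
move=> mg mh gh; congr fine; apply: ae_eq_integral => //.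
- exact/measurable_EFinP.
- exact/measurable_EFinP.
- by apply: filterS gh => x gh_x _; rewrite /= gh_x.
Qed.

Lemma inL2_le_norm (g h : T -> R) : measurable_fun setT g ->
  (forall x, `|g x| <= `|h x|) -> inL2 mu h -> inL2 mu g.
Proof.
move=> mg gh [mh ih]; split => //; apply: le_lt_trans ih.
have sqr0 (u : T -> R) x : (0 <= (u x ^+ 2)%:E)%E by rewrite lee_fin sqr_ge0.
have msqr (u : T -> R) :
    measurable_fun setT u -> measurable_fun setT (fun x => (u x ^+ 2)%:E).
  by move=> mu'; apply/measurable_EFinP; exact: measurable_funX.
apply: ge0_le_integral => //; [exact: msqr | exact: msqr |].
move=> x _; rewrite lee_fin -[g x ^+ 2]real_normK ?num_real //.
by rewrite -[h x ^+ 2]real_normK ?num_real // lerXn2r ?nnegrE.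
Qed.

Lemma inL2_funrpos (g : T -> R) : inL2 mu g -> inL2 mu g^\+.
Proof.
move=> g2; apply: (inL2_le_norm _ _ g2); first by apply: measurable_funrpos; case: g2.
move=> x; rewrite ger0_norm ?funrpos_ge0 // -[`|g x|]/((Num.norm \o g) x) -funrposDneg.
by rewrite lerDl funrneg_ge0.
Qed.

Lemma inL2_funrneg (g : T -> R) : inL2 mu g -> inL2 mu g^\-.
Proof.
move=> g2; apply: (inL2_le_norm _ _ g2); first by apply: measurable_funrneg; case: g2.
move=> x; rewrite ger0_norm ?funrneg_ge0 // -[`|g x|]/((Num.norm \o g) x) -funrposDneg.
by rewrite lerDr funrpos_ge0.
Qed.

End L2_measure.

Section L2_probability.
Context d (T : measurableType d) (R : realType) (mu : {measure set T -> \bar R}).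
Hypothesis mu1 : mu setT = 1%E.

Lemma inL2_cst1 : inL2 mu (cst 1).
Proof.
split=> //; rewrite (_ : (fun x => _) = cst 1%E); last first.
  by apply/funext => x; rewrite /= expr1n.
by rewrite integral_cst // mu1 mule1 ltry.
Qed.

Lemma inL2_integrable (g : T -> R) : inL2 mu g -> mu.-integrable setT (EFin \o g).
Proof.
move=> g2; apply: eq_integrable (inL2_integrable_mul g2 inL2_cst1) => // x _.
by rewrite /= mulr1.
Qed.

Lemma sqr_Rintegral_le (g : T -> R) : measurable_fun setT g ->
  (((\int[mu]_x g x) ^+ 2)%:E <= \int[mu]_x (g x ^+ 2)%:E)%E.
Proof.
move=> mg; have [g2|] := ltP (\int[mu]_x (g x ^+ 2)%:E)%E +oo%E; last first.
  by rewrite leye_eq => /eqP ->; rewrite leey.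
have := Rintegral_cauchy_schwarz (conj mg g2) inL2_cst1.
under [X in _ * X]eq_Rintegral do rewrite /= expr1n.
rewrite Rintegral_cst // mu1 /= mul1r mulr1.
under eq_Rintegral do rewrite mulr1.
rewrite -lee_fin => /le_trans; apply; rewrite /Rintegral fineK //.
by rewrite ge0_fin_numE // integral_ge0 // => x _; rewrite lee_fin sqr_ge0.
Qed.

End L2_probability.

(* The bound [a n <= A] forces [a = 0] when [A = 0]; without it the limit fails
   for [c = +oo], since [0 * +oo = 0]. *)
Lemma cvgeMr_ge0 (R : realType) (a : (\bar R)^nat) (A c : \bar R) :
  (forall n, 0 <= a n)%E -> (forall n, a n <= A)%E -> (0 <= c)%E ->
  a n @[n --> \oo] --> A -> (a n * c)%E @[n --> \oo] --> (A * c)%E.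
Proof.
move=> a0 aA c0 a_cvg.
have [->|cn0] := eqVneq c 0%E.
  by rewrite mule0; under eq_fun do rewrite mule0; exact: cvg_cst.
have [A0|An0] := eqVneq A 0%E.
  have a_eq0 n : a n = 0%E by apply/eqP; rewrite eq_le a0 andbT -A0 aA.
  by rewrite A0 mul0e; under eq_fun do rewrite a_eq0 mul0e; exact: cvg_cst.
apply: cvgeM => //; last exact: cvg_cst.
have [cf|cf] := boolP (c \is a fin_num); last exact: mule_def_neq0_infty.
have [Af|Af] := boolP (A \is a fin_num); first exact: mule_def_fin.
exact: mule_def_infty_neq0.
Qed.

Section nonneg_functional.
Local Open Scope ereal_scope.
Context d (T : measurableType d) (R : realType).
Implicit Types Phi Psi : (T -> \bar R) -> \bar R.

Definition simple_additive Phi := forall f : {nnsfun T >-> R},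
  Phi (EFin \o f) = \sum_(r \in range f) r%:E * Phi (EFin \o \1_(f @^-1` [set r])).

Definition monotone_continuous Phi := forall (G : (T -> \bar R)^nat) g,
  (forall n, measurable_fun setT (G n)) -> (forall n x, 0 <= G n x) ->
  (forall x, nondecreasing_seq (G ^~ x)) -> (forall x, G n x @[n --> \oo] --> g x) ->
  Phi (G n) @[n --> \oo] --> Phi g.

Lemma eq_nonneg_functional Phi Psi :
  simple_additive Phi -> simple_additive Psi ->
  monotone_continuous Phi -> monotone_continuous Psi ->
  (forall A, measurable A -> Phi (EFin \o \1_A) = Psi (EFin \o \1_A)) ->
  forall g, (forall x, 0 <= g x) -> measurable_fun setT g -> Phi g = Psi g.
Proof.
move=> addPhi addPsi cPhi cPsi indic g g0 mg.
pose f := nnsfun_approx measurableT mg.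
have simple n : Phi (EFin \o f n) = Psi (EFin \o f n).
  by rewrite addPhi addPsi; apply: eq_fsbigr => r _; rewrite indic.
have mf n : measurable_fun setT (EFin \o f n) by exact/measurable_EFinP.
have f0 n x : 0 <= (EFin \o f n) x by rewrite lee_fin.
have fnd x : nondecreasing_seq (fun n => (EFin \o f n) x).
  by move=> a b ab; rewrite lee_fin; exact/lefP/nd_nnsfun_approx.
have fg x : (EFin \o f n) x @[n --> \oo] --> g x.
  exact: (cvg_nnsfun_approx measurableT mg (fun x _ => g0 x) (I : setT x)).
have := cPsi _ _ mf f0 fnd fg; under eq_fun do rewrite -simple.
exact/cvg_unique/(cPhi _ _ mf f0 fnd fg).
Qed.

End nonneg_functional.

Section integral_functional.
Local Open Scope ereal_scope.
Context d (T : measurableType d) (R : realType) (mu : {measure set T -> \bar R}).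
Variable u : T -> \bar R.
Hypotheses (u0 : forall x, 0 <= u x) (mU : measurable_fun setT u).

Lemma integral_mulr_simple_additive :
  simple_additive (fun g => \int[mu]_x (g x * u x)).
Proof.
move=> f.
transitivity (\int[mu]_x (\sum_(r \in range f) (r * \1_(f @^-1` [set r]) x)%:E * u x)).
  apply: eq_integral => x _; rewrite -ge0_mule_fsuml; last first.
    by move=> r; exact: nnfun_muleindic_ge0.
  by rewrite fsumEFin // -fimfunE.
rewrite ge0_integral_fsum //; last 2 first.
- move=> r; apply: emeasurable_funM => //.
  by apply/measurable_EFinP; apply: measurable_funM => //; exact: measurable_indic.
- by move=> r x _; rewrite mule_ge0 // nnfun_muleindic_ge0.
apply: eq_fsbigr => r; rewrite inE => -[t _ <-].
under eq_integral do rewrite EFinM -muleA.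
rewrite ge0_integralZl //.
- by apply: emeasurable_funM => //; apply/measurable_EFinP; exact: measurable_indic.
- by move=> x _; rewrite mule_ge0 // lee_fin.
- by rewrite lee_fin.
Qed.

Lemma integral_mulr_monotone_continuous :
  monotone_continuous (fun g => \int[mu]_x (g x * u x)).
Proof.
move=> G g mG G0 ndG Gg.
have g_ge n x : G n x <= g x.
  rewrite -(cvg_lim _ (Gg x)) //; apply: lime_ge; first by apply/cvg_ex; exists (g x).
  by near=> m; apply: ndG; near: m; exists n.
have := @cvg_monotone_convergence _ _ _ mu setT measurableT (fun n x => G n x * u x)
  (fun n => emeasurable_funM (mG n) mU) (fun n x _ => mule_ge0 (G0 n x) (u0 x))
  (fun x _ a b ab => lee_wpmul2r (u0 x) (ndG x a b ab)).
suff -> : \int[mu]_x (g x * u x) = \int[mu]_x limn (fun n => G n x * u x) by [].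
apply: eq_integral => x _; apply/esym/cvg_lim => //.
apply: cvgeMr_ge0 => //; exact: g_ge.
Unshelve. all: by end_near.
Qed.

End integral_functional.

Section kernel_form.
Local Open Scope ereal_scope.
Context d (T : measurableType d) (R : realType) (pi : {measure set T -> \bar R}).
Variable K : R.-ker T ~> T.

Definition Kint (u : T -> \bar R) x := \int[K x]_y u y.

Definition Kform (g h : T -> \bar R) := \int[pi]_x (g x * Kint h x).

Lemma Kint_ge0 u : (forall x, 0 <= u x) -> forall x, 0 <= Kint u x.
Proof. by move=> u0 x; exact: integral_ge0. Qed.

Lemma measurable_Kint u : (forall x, 0 <= u x) -> measurable_fun setT u ->
  measurable_fun setT (Kint u).
Proof.
by move=> u0 mu; apply: measurable_fun_integral_kernel => //; exact: measurable_kernel.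
Qed.

Lemma Kint_indic A x : measurable A -> Kint (EFin \o \1_A) x = K x A.
Proof. by move=> mA; rewrite /Kint integral_indic // setIT. Qed.

Lemma Kint_simple (f : {nnsfun T >-> R}) x :
  Kint (EFin \o f) x = \sum_(r \in range f) r%:E * K x (f @^-1` [set r]).
Proof.
rewrite /Kint; transitivity (\int[K x]_y ((EFin \o f) y * cst 1 y)).
  by apply: eq_integral => y _; rewrite mule1.
rewrite integral_mulr_simple_additive //; apply: eq_fsbigr => r _.
by rewrite -Kint_indic // /Kint; congr (_ * _); apply: eq_integral => y _; rewrite mule1.
Qed.

Lemma Kint_monotone_continuous x : monotone_continuous (Kint ^~ x).
Proof.
rewrite (_ : Kint ^~ x = fun g => \int[K x]_y (g y * cst 1 y)).
  exact: integral_mulr_monotone_continuous.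
by apply/funext => g; apply: eq_integral => y _; rewrite mule1.
Qed.

Lemma Kform_indic A B : measurable A -> measurable B ->
  Kform (EFin \o \1_A) (EFin \o \1_B) = \int[pi]_(x in A) K x B.
Proof.
move=> mA mB; rewrite /Kform [RHS]integral_mkcond epatch_indic.
by apply: eq_integral => x _ /=; rewrite Kint_indic // muleC.
Qed.

Variable h : T -> \bar R.
Hypotheses (h0 : forall x, 0 <= h x) (mh : measurable_fun setT h).

Lemma Kform_simple_additive_l : simple_additive (Kform ^~ h).
Proof.
by apply: integral_mulr_simple_additive; [exact: Kint_ge0 | exact: measurable_Kint].
Qed.

Lemma Kform_monotone_continuous_l : monotone_continuous (Kform ^~ h).
Proof.
by apply: integral_mulr_monotone_continuous; [exact: Kint_ge0 | exact: measurable_Kint].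
Qed.

Lemma Kform_simple_additive_r : simple_additive (Kform h).
Proof.
move=> f; have mK A : measurable A -> measurable_fun setT (fun x => K x A).
  by move=> mA; exact: measurable_kernel.
have Kform_h_indic A :
    measurable A -> Kform h (EFin \o \1_A) = \int[pi]_x (h x * K x A).
  by move=> mA; apply: eq_integral => x _; rewrite Kint_indic.
transitivity (\int[pi]_x (\sum_(r \in range f) r%:E * (h x * K x (f @^-1` [set r])))).
  apply: eq_integral => x _; rewrite Kint_simple ge0_mule_fsumr; last first.
    by move=> r; apply: (mulemu_ge0 (fun r => f @^-1` [set r])); exact: preimage_nnfun0.
  by apply: eq_fsbigr => r _; rewrite muleCA.
rewrite ge0_integral_fsum //; last 2 first.
- by move=> r; apply: emeasurable_funM => //; apply: emeasurable_funM => //; exact: mK.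
- move=> r x _; rewrite muleCA mule_ge0 //.
  by apply: (mulemu_ge0 (fun r => f @^-1` [set r])); exact: preimage_nnfun0.
apply: eq_fsbigr => r; rewrite inE => -[t _ <-].
rewrite Kform_h_indic // ge0_integralZl ?lee_fin //.
- by apply: emeasurable_funM => //; exact: mK.
- by move=> x _; exact: mule_ge0.
Qed.

Lemma Kform_monotone_continuous_r : monotone_continuous (Kform h).
Proof.
move=> G g mG G0 ndG Gg.
rewrite (_ : Kform h = fun g => \int[pi]_x (Kint g x * h x)); last first.
  by apply/funext => u; apply: eq_integral => x _; rewrite muleC.
apply: integral_mulr_monotone_continuous => //.
- by move=> n; exact: measurable_Kint.
- by move=> n; exact: Kint_ge0.
- by move=> x a b ab; apply: ge0_le_integral => // y _; exact: ndG.
- by move=> x; exact: Kint_monotone_continuous.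
Qed.

Lemma Kform_sym_of_indic :
  (forall A, measurable A -> Kform (EFin \o \1_A) h = Kform h (EFin \o \1_A)) ->
  forall g, (forall x, 0 <= g x) -> measurable_fun setT g -> Kform g h = Kform h g.
Proof.
apply: eq_nonneg_functional.
- exact: Kform_simple_additive_l.
- exact: Kform_simple_additive_r.
- exact: Kform_monotone_continuous_l.
- exact: Kform_monotone_continuous_r.
Qed.

End kernel_form.

Section reversible_kernel.
Local Open Scope ereal_scope.
Context d (T : measurableType d) (R : realType) (pi : {measure set T -> \bar R}).
Variable K : R.-pker T ~> T.
Hypothesis hrev : reversible K pi.

Lemma Kform_sym g h : (forall x, 0 <= g x) -> measurable_fun setT g ->
  (forall x, 0 <= h x) -> measurable_fun setT h ->
  Kform pi K g h = Kform pi K h g.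
Proof.
have sym_indic B u : measurable B -> (forall x, 0 <= u x) -> measurable_fun setT u ->
    Kform pi K u (EFin \o \1_B) = Kform pi K (EFin \o \1_B) u.
  move=> mB u0 mu; have indic0 x : 0 <= (EFin \o \1_B) x :> \bar R by rewrite lee_fin.
  have m1B : measurable_fun setT (EFin \o \1_B :> T -> \bar R).
    by apply/measurable_EFinP; exact: measurable_indic.
  apply: (Kform_sym_of_indic indic0 m1B) u0 mu => A mA.
  by rewrite !Kform_indic // hrev.
move=> g0 mg h0 mh; apply: (Kform_sym_of_indic h0 mh) g0 mg => A mA.
by rewrite sym_indic.
Qed.

End reversible_kernel.

Section markov_operator.
Context d (T : measurableType d) (R : realType) (pi : probability T R).
Variable K : R.-pker T ~> T.
Hypothesis hrev : reversible K pi.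

Lemma integral_Kint (u : T -> \bar R) :
  (forall x, 0 <= u x)%E -> measurable_fun setT u ->
  (\int[pi]_x Kint K u x = \int[pi]_x u x)%E.
Proof.
move=> u0 mu.
have := Kform_sym hrev (g := cst 1%E) (fun _ => lee01) (measurable_cst _) u0 mu.
rewrite /Kform; under eq_integral do rewrite mul1e; move=> ->.
apply: eq_integral => x _.
by rewrite /Kint integral_cst // prob_kernel !mule1.
Qed.

Lemma measurable_Kop (g : T -> R) :
  measurable_fun setT g -> measurable_fun setT (Kop K g).
Proof.
move=> mg; have mEg : measurable_fun setT (EFin \o g) by exact/measurable_EFinP.
rewrite (_ : Kop K g =
    fine \o (fun x => Kint K (EFin \o g)^\+ x - Kint K (EFin \o g)^\- x)%E).
  apply: measurableT_comp => //; apply: emeasurable_funB.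
  - by apply: measurable_Kint => //; exact: measurable_funepos.
  - by apply: measurable_Kint => //; exact: measurable_funeneg.
by apply/funext => x; rewrite /Kop /Rintegral integralE.
Qed.

Lemma sqr_Kop_le (g : T -> R) x : measurable_fun setT g ->
  (((Kop K g x) ^+ 2)%:E <= Kint K (fun y => (g y ^+ 2)%:E) x)%E.
Proof. by move=> mg; apply: sqr_Rintegral_le => //; exact: prob_kernel. Qed.

Lemma inL2_Kop (g : T -> R) : inL2 pi g -> inL2 pi (Kop K g).
Proof.
move=> [mg ig]; split; first exact: measurable_Kop.
have sqr0 (u : T -> R) x : (0 <= (u x ^+ 2)%:E)%E by rewrite lee_fin sqr_ge0.
have msqr (u : T -> R) :
    measurable_fun setT u -> measurable_fun setT (fun x => (u x ^+ 2)%:E).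
  by move=> mu; apply/measurable_EFinP; exact: measurable_funX.
apply: le_lt_trans ig; rewrite -(integral_Kint (sqr0 g) (msqr g mg)).
apply: ge0_le_integral => //; first exact/msqr/measurable_Kop.
- by apply: measurable_Kint => //; exact: msqr.
- by move=> x _; exact: sqr_Kop_le.
Qed.

Lemma inL2_Kpow (g : T -> R) n : inL2 pi g -> inL2 pi (Kpow K n g).
Proof. by move=> g2; elim: n => // n IHn; rewrite /Kpow iterS; exact: inL2_Kop. Qed.

Lemma ae_kernel_integrable (h : T -> R) : inL2 pi h ->
  {ae pi, forall x, (K x).-integrable setT (EFin \o h)}.
Proof.
move=> h2; have [mh _] := h2.
have ih := inL2_integrable (probability_setT pi) h2.
have mah : measurable_fun setT (fun y => `|(h y)%:E|)%E.
  by apply: measurableT_comp => //; exact/measurable_EFinP.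
have Kah0 x : (0 <= Kint K (fun y => `|(h y)%:E|) x)%E by exact: Kint_ge0.
have iKah : pi.-integrable setT (Kint K (fun y => `|(h y)%:E|)%E).
  apply/integrableP; split; first exact: measurable_Kint.
  under eq_integral do rewrite gee0_abs //.
  by rewrite integral_Kint //; case/integrableP : ih.
apply: filterS (integrable_ae measurableT iKah) => x /(_ I) Kah_fin.
apply/integrableP; split; first exact/measurable_EFinP.
by rewrite -ge0_fin_numE ?Kah_fin // integral_ge0.
Qed.

Lemma Kop_EFin (h : T -> R) x : (K x).-integrable setT (EFin \o h) ->
  (Kop K h x)%:E = Kint K (EFin \o h) x.
Proof.
by move=> ih; rewrite /Kop /Rintegral fineK //; exact: integrable_fin_num.
Qed.

Lemma Kop_funrposBneg (h : T -> R) x : (K x).-integrable setT (EFin \o h) ->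
  Kop K h x = Kop K h^\+ x - Kop K h^\- x.
Proof.
move=> ih; rewrite /Kop -RintegralB //; last exact: integrable_funrneg.
  by apply: eq_Rintegral => y _; rewrite -[in LHS](funrposBneg h).
exact: integrable_funrpos.
Qed.

Lemma Rintegral_mul_Kop_ge0 (u v : T -> R) : measurable_fun setT u ->
  (forall x, 0 <= v x) -> inL2 pi v ->
  \int[pi]_x (u x * Kop K v x) = fine (Kform pi K (EFin \o u) (EFin \o v)).
Proof.
move=> mu v0 v2; have [mv _] := v2.
rewrite /Rintegral /Kform; congr fine; apply: ae_eq_integral => //.
- by apply/measurable_EFinP; apply: measurable_funM => //; exact: measurable_Kop.
- apply: emeasurable_funM; first exact/measurable_EFinP.
  by apply: measurable_Kint => [y|]; [rewrite lee_fin | exact/measurable_EFinP].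
apply: filterS (ae_kernel_integrable v2) => x iv _.
by rewrite /= EFinM Kop_EFin.
Qed.

Lemma Rintegral_mul_Kop_sym_ge0 (u v : T -> R) : inL2 pi u -> inL2 pi v ->
  (forall x, 0 <= u x) -> (forall x, 0 <= v x) ->
  \int[pi]_x (u x * Kop K v x) = \int[pi]_x (v x * Kop K u x).
Proof.
move=> u2 v2 u0 v0; have [mu _] := u2; have [mv _] := v2.
have [mEu mEv] : measurable_fun setT (EFin \o u) /\ measurable_fun setT (EFin \o v).
  by split; exact/measurable_EFinP.
rewrite (Rintegral_mul_Kop_ge0 mu v0 v2) (Rintegral_mul_Kop_ge0 mv u0 u2).
by rewrite Kform_sym // => x; rewrite lee_fin.
Qed.

Lemma Rintegral_mul_Kop_funrposBneg (g h : T -> R) : inL2 pi g -> inL2 pi h ->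
  \int[pi]_x (g x * Kop K h x) =
  \int[pi]_x (g x * Kop K h^\+ x) - \int[pi]_x (g x * Kop K h^\- x).
Proof.
move=> g2 h2; have [mg _] := g2; have [mh _] := h2.
rewrite -RintegralB //; last exact/inL2_integrable_mul/inL2_Kop/inL2_funrneg.
  apply: ae_eq_Rintegral.
  - by apply: measurable_funM => //; exact: measurable_Kop.
  - apply: measurable_funB; apply: measurable_funM => //; apply: measurable_Kop.
      exact: measurable_funrpos.
    exact: measurable_funrneg.
  apply: filterS (ae_kernel_integrable h2) => x ih.
  by rewrite Kop_funrposBneg // mulrBr.
exact/inL2_integrable_mul/inL2_Kop/inL2_funrpos.
Qed.

Lemma Rintegral_funrposBneg_mul_Kop (g h : T -> R) : inL2 pi g -> inL2 pi h ->
  \int[pi]_x (g x * Kop K h x) =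
  \int[pi]_x (g^\+ x * Kop K h x) - \int[pi]_x (g^\- x * Kop K h x).
Proof.
move=> g2 h2; have Kh2 := inL2_Kop h2.
rewrite -RintegralB //; last exact/inL2_integrable_mul/Kh2/inL2_funrneg.
  by apply: eq_Rintegral => x _; rewrite -mulrBl -[in LHS](funrposBneg g).
exact/inL2_integrable_mul/Kh2/inL2_funrpos.
Qed.

Lemma Rintegral_mul_Kop_sym (g h : T -> R) : inL2 pi g -> inL2 pi h ->
  \int[pi]_x (g x * Kop K h x) = \int[pi]_x (Kop K g x * h x).
Proof.
move=> g2 h2; under [RHS]eq_Rintegral do rewrite mulrC.
have [g2p g2n] := (inL2_funrpos g2, inL2_funrneg g2).
have [h2p h2n] := (inL2_funrpos h2, inL2_funrneg h2).
rewrite (Rintegral_funrposBneg_mul_Kop g2 h2) (Rintegral_funrposBneg_mul_Kop h2 g2).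
rewrite (Rintegral_mul_Kop_funrposBneg g2p h2) (Rintegral_mul_Kop_funrposBneg g2n h2).
rewrite (Rintegral_mul_Kop_funrposBneg h2p g2) (Rintegral_mul_Kop_funrposBneg h2n g2).
rewrite (Rintegral_mul_Kop_sym_ge0 g2p h2p (@funrpos_ge0 _ _ g) (@funrpos_ge0 _ _ h)).
rewrite (Rintegral_mul_Kop_sym_ge0 g2p h2n (@funrpos_ge0 _ _ g) (@funrneg_ge0 _ _ h)).
rewrite (Rintegral_mul_Kop_sym_ge0 g2n h2p (@funrneg_ge0 _ _ g) (@funrpos_ge0 _ _ h)).
rewrite (Rintegral_mul_Kop_sym_ge0 g2n h2n (@funrneg_ge0 _ _ g) (@funrneg_ge0 _ _ h)).
have swap (a b c e : R) : a - b - (c - e) = a - c - (b - e) by ring.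
exact: swap.
Qed.

Lemma L2norm2_Kpow_log_convex (f : T -> R) k : inL2 pi f ->
  L2norm2 pi (Kpow K k.+1 f) ^+ 2 <=
  L2norm2 pi (Kpow K k f) * L2norm2 pi (Kpow K k.+2 f).
Proof.
move=> f2; set u := Kpow K k f.
have u2 : inL2 pi u := inL2_Kpow k f2.
have Ku2 := inL2_Kop u2.
have -> : L2norm2 pi (Kpow K k.+1 f) = \int[pi]_x (u x * Kop K (Kop K u) x).
  rewrite (Rintegral_mul_Kop_sym u2 Ku2) /L2norm2 /Kpow iterS.
  by apply: eq_Rintegral => x _; rewrite expr2.
rewrite /L2norm2 /Kpow !iterS -/u.
exact: Rintegral_cauchy_schwarz (inL2_Kop Ku2).
Qed.

End markov_operator.

Lemma log_convex_geometric_lb (R : realFieldType) (m : nat -> R) :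
  0 < m 0%N -> (forall k, 0 <= m k) -> (forall k, m k.+1 ^+ 2 <= m k * m k.+2) ->
  forall n, (m 1%N / m 0%N) ^+ n <= m n / m 0%N.
Proof.
move=> m0 m_ge0 m_lc n; set r := m 1%N / m 0%N.
rewrite ler_pdivlMr //.
have [r0|r_neq0] := eqVneq r 0.
  by case: n => [|n]; rewrite ?expr0 ?mul1r // r0 expr0n mul0r.
have r_gt0 : 0 < r by rewrite lt_def r_neq0 divr_ge0 // ltW.
have ratio k : 0 < m k /\ r * m k <= m k.+1.
  elim: k => [|k [mk_gt0 rmk]].
    by rewrite /r mulrAC -mulrA divff ?mulr1 ?gt_eqF.
  have mk1_gt0 : 0 < m k.+1 by apply: lt_le_trans rmk; rewrite mulr_gt0.
  split => //; rewrite -(ler_pM2l mk_gt0).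
  have -> : m k * (r * m k.+1) = m k.+1 * (r * m k) by ring.
  by apply: le_trans (m_lc k); rewrite expr2 ler_pM2l.
elim: n => [|n IHn]; first by rewrite expr0 mul1r.
rewrite exprSr mulrAC mulrC; apply: le_trans (proj2 (ratio n)).
by rewrite ler_pM2l.
Qed.

Unset Implicit Arguments.

Theorem lemma7 (d : measure_display) (T : measurableType d) (R : realType)
  (pi : probability T R) (K : R.-pker T ~> T)
  (hrev : reversible K pi) (f : T -> R) (hf : inL2 pi f)
  (hf0 : L2norm2 pi f != 0) (n : nat) (hn : (1 <= n)%N) :
  (L2norm2 pi (Kop K f) / L2norm2 pi f) ^+ n
    <= L2norm2 pi (Kpow K n f) / L2norm2 pi f.
Proof.
pose m k := L2norm2 pi (Kpow K k f).
have m_ge0 k : 0 <= m k by apply: Rintegral_ge0 => x _; exact: sqr_ge0.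
have m0_gt0 : 0 < m 0%N by rewrite lt_def hf0 m_ge0.
have m_log_convex k : m k.+1 ^+ 2 <= m k * m k.+2.
  by rewrite /m; exact: L2norm2_Kpow_log_convex.
exact: log_convex_geometric_lb m0_gt0 m_ge0 m_log_convex n.
Qed.
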